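(* For all integers $n\ge 1$, $$s_3(n)=\tfrac{4}{3}n^3-3n^2+\tfrac{8}{3}n-1,\qquad d_3(n)=\tfrac{2}{3}n^4-\tfrac{4}{3}n^3+\tfrac{11}{6}n^2-\tfrac{13}{6}n+1.$$
   Context: For $n\ge 1$, the $2\times n$ board consists of $2n$ unit squares arranged in 2 rows and $n$ columns; two squares are adjacent iff they share an edge. A piece is a nonempty set of squares that is connected under adjacency. A division of the board into $k$ pieces is a partition of the set of all $2n$ squares into exactly $k$ pieces. $d_k(n)$ denotes the number of divisions of the $2\times n$ board into $k$ pieces. $s_k(n)$ denotes the number of such divisions in which the two squares of the rightmost column lie in different pieces. *)

From mathcomp Require Import all_boot all_order all_algebra.
Set Implicit Arguments. Unset Strict Implicit. Unset Printing Implicit Defensive.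

Definition square (n : nat) := ('I_2 * 'I_n)%type.

Definition adj (n : nat) : rel (square n) := fun x y =>
  ((x.1 == y.1) && ((x.2.+1 == y.2 :> nat) || (y.2.+1 == x.2 :> nat)))
  || ((x.2 == y.2) && (x.1 != y.1)).

Definition connected_set (n : nat) (A : {set square n}) : bool :=
  [forall x in A, forall y in A,
     connect [rel u v | adj u v && (u \in A) && (v \in A)] x y].

Definition piece (n : nat) (A : {set square n}) : bool :=
  (A != set0) && connected_set A.

Definition division (n k : nat) (P : {set {set square n}}) : bool :=
  [&& partition P [set: square n], [forall A in P, piece A] & #|P| == k].

Arguments division : clear implicits.

Definition d (k n : nat) : nat := #|[set P | division n k P]|.

(* Rightmost column is column n-1; its two squares lie in different pieces. *)
Definition right_split (n : nat) (P : {set {set square n}}) : bool :=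
  match n as m return {set {set square m}} -> bool with
  | 0 => fun _ => false
  | m.+1 => fun P => pblock P (ord0, ord_max) != pblock P (1%R, ord_max)
  end P.
Arguments right_split : clear implicits.

Definition s (k n : nat) : nat :=
  #|[set P | division n k P & right_split n P]|.

From mathcomp Require Import all_boot all_order all_algebra.
From mathcomp Require Import zify ring.
Set Implicit Arguments. Unset Strict Implicit. Unset Printing Implicit Defensive.

(* A division of the 2 x (m+2) board restricts to a division of the
   2 x (m+1) board formed by its first m+1 columns (pieces stay connected
   because a path through the new last column can be rerouted through the
   column before it).  The division is recovered from its restriction Q
   together with three bits telling whether the new top square is joined
   to its left neighbour, whether the new bottom square is, and whether
   the two new squares are joined.  Which bit triples occur depends only on
   whether the last column of Q is split, and each triple adds a fixed
   number of new pieces.  Hence the numbers ndiv n k b of divisions into k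
   pieces whose last column is split (b = true) or not (b = false) obey a
   linear recursion in n (ndiv_split_rec, ndiv_joined_rec).  Solving it
   by induction for k <= 3, starting from the 2 x 1 board, gives
   polynomial formulas for s 3 n = ndiv n 3 true and
   d 3 n = ndiv n 3 true + ndiv n 3 false. *)

Section FiniteTypes.
Variable T : finType.

Lemma connect_closed (e : rel T) (a : pred T) :
  (forall x y, e x y -> a x -> a y) -> forall x y, connect e x y -> a x -> a y.
Proof.
move=> stable x y /connectP [p ep ->]; elim: p x ep => //= z p IH x.
by case/andP=> exz pz ax; apply: IH pz (stable _ _ exz ax).
Qed.

Lemma connect_map (T' : finType) (e : rel T) (e' : rel T') (a : pred T)
    (f : T -> T') :
  (forall x y, e x y -> a x -> a y) ->
  (forall x y, e x y -> a x -> f x = f y \/ e' (f x) (f y)) ->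
  forall x y, connect e x y -> a x -> connect e' (f x) (f y).
Proof.
move=> stable fstep x y /connectP [p ep ->]; elim: p x ep => //= z p IH x.
case/andP=> exz pz ax; apply: connect_trans (IH _ pz (stable _ _ exz ax)).
by case: (fstep _ _ exz ax) => [->|fxz]; [exact: connect0 | exact: connect1].
Qed.

Lemma preim_partition_ext (K1 K2 : eqType) (f : T -> K1) (g : T -> K2) D :
  (forall x y, (f x == f y) = (g x == g y)) ->
  preim_partition f D = preim_partition g D.
Proof.
move=> same_ker; apply: eq_imset => x.
by apply/setP => y; rewrite !inE same_ker.
Qed.

Lemma eq_pblock_preim (K : eqType) (f : T -> K) x y :
  (pblock (preim_partition f [set: T]) x == pblock (preim_partition f [set: T]) y)
   = (f x == f y).
Proof.
have [/eqP cov ti _] := and3P (preim_partitionP f [set: T]).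
rewrite eq_pblock // ?cov ?inE // pblock_equivalence_partition ?inE //.
by split=> // /eqP ->.
Qed.

Lemma eq_pblock_mem (P : {set {set T}}) x y : partition P [set: T] ->
  (pblock P x == pblock P y) = (y \in pblock P x).
Proof. by case/and3P => /eqP cov ti _; rewrite eq_pblock // cov inE. Qed.

Lemma card_preim_partition (K : finType) (f : T -> K) :
  #|preim_partition f [set: T]| = #|f @: [set: T]|.
Proof.
have -> : preim_partition f [set: T] =
          (fun l => [set y | l == f y]) @: (f @: [set: T]).
  by rewrite -imset_comp; apply: eq_imset => x; apply/setP => y; rewrite !inE.
apply: card_in_imset => _ _ /imsetP[x _ ->] /imsetP[y _ ->] /setP /(_ x).
by rewrite !inE eqxx => /esym /eqP ->.
Qed.

Lemma pblock_imsetT (P : {set {set T}}) : partition P [set: T] ->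
  pblock P @: [set: T] = P.
Proof.
move=> partP; have [/eqP cov ti _] := and3P partP.
apply/setP => B; apply/imsetP/idP => [[x _ ->]|PB].
  by apply: pblock_mem; rewrite cov inE.
have /set0Pn [x Bx] := partition_neq0 partP PB.
by exists x => //; rewrite (def_pblock ti PB Bx).
Qed.

Lemma card_set_sum (p : pred T) : #|[set x | p x]| = \sum_x (p x : nat).
Proof. by rewrite -sum1dep_card big_mkcond; apply: eq_bigr => x _; case: (p x). Qed.

Lemma card_set_pair (B : finType) (F : T -> B -> bool) :
  #|[set p : T * B | F p.1 p.2]| = \sum_(b : B) #|[set a | F a b]|.
Proof.
rewrite -sum1dep_card big_mkcond /=.
rewrite -(pair_bigA _ (fun a b => if F a b then 1 else 0)) exchange_big /=.
by apply: eq_bigr => b _; rewrite -sum1dep_card [RHS]big_mkcond.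
Qed.

Lemma cardsU2 (X : {set T}) a b :
  #|X :|: [set a; b]| = #|X| + ((a != b) && (a \notin X)) + (b \notin X).
Proof.
rewrite setUC -!setUA cardsU1 cardsU1 in_setU1 negb_or.
by case: (a != b); case: (a \in X); case: (b \in X) => /=; lia.
Qed.

End FiniteTypes.

Lemma inl_eq (K1 K2 : eqType) (a b : K1) : (inl a == inl b :> K1 + K2) = (a == b).
Proof. by []. Qed.

Definition adj_in n (A : {set square n}) :=
  [rel u v : square n | adj u v && (u \in A) && (v \in A)].

Lemma adj_inI n (A : {set square n}) x y :
  adj x y -> x \in A -> y \in A -> adj_in A x y.
Proof. by move=> xy xA yA; rewrite /= xy xA yA. Qed.

Lemma adj_sym n (x y : square n) : adj x y = adj y x.
Proof.
rewrite /adj; congr (_ || _); first by rewrite eq_sym orbC.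
by rewrite eq_sym (eq_sym x.1).
Qed.

Lemma connect_adj_in_sym n (A : {set square n}) x y :
  connect (adj_in A) x y = connect (adj_in A) y x.
Proof.
apply: sym_connect_sym => u v.
by rewrite /= adj_sym -!andbA; congr (_ && _); rewrite andbC.
Qed.

Lemma connectedP n (A : {set square n}) :
  reflect (forall x y, x \in A -> y \in A -> connect (adj_in A) x y)
          (connected_set A).
Proof.
apply: (iffP forall_inP) => [conn x y xA yA|conn x xA].
  by move/forall_inP: (conn x xA); apply.
by apply/forall_inP => y yA; apply: conn.
Qed.

Definition row1 : 'I_2 := 1%R.
Definition flip (r : 'I_2) : 'I_2 := if r == ord0 then row1 else ord0.

Lemma row_cases (r : 'I_2) : r = ord0 \/ r = row1.
Proof. by case: r => [[|[|k]]] //= lt_r; [left|right]; apply: val_inj. Qed.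

Lemma neq_flip r : r != flip r.
Proof. by case: (row_cases r) => ->. Qed.

Lemma flipK r : flip (flip r) = r.
Proof. by case: (row_cases r) => ->. Qed.

Lemma neq_flipE r r' : r != r' -> r' = flip r.
Proof. by case: (row_cases r) => ->; case: (row_cases r') => ->. Qed.

Definition piece_partition n (P : {set {set square n}}) :=
  partition P [set: square n] && [forall A in P, piece A].

Section BoardExtension.
Variable m : nat.
Local Notation old_square := (square m.+1).
Local Notation new_square := (square m.+2).

Definition emb (x : old_square) : new_square := (x.1, widen_ord (leqnSn _) x.2).
Definition down (x : new_square) : old_square := (x.1, inord x.2).
Definition is_new (x : new_square) := x.2 == ord_max.
Definition last_sq (r : 'I_2) : old_square := (r, ord_max).
Definition new_sq (r : 'I_2) : new_square := (r, ord_max).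

Lemma embK x : down (emb x) = x.
Proof. by case: x => a c; rewrite /down /emb /= inord_val. Qed.

Lemma is_new_emb x : is_new (emb x) = false.
Proof. by case: x => a [c lt_c]; rewrite /is_new -val_eqE /= ltn_eqF. Qed.

Lemma is_new_sq r : is_new (new_sq r). Proof. exact: eqxx. Qed.

Lemma downK x : ~~ is_new x -> emb (down x) = x.
Proof.
case: x => a [c lt_c]; rewrite /is_new -val_eqE /= => c_neq.
have lt_c' : c < m.+1 by move: lt_c c_neq; rewrite ltnS leq_eqVlt => /orP[->|].
by congr (_, _); apply: val_inj; rewrite /= inordK.
Qed.

Lemma squareP x : {z | x = emb z} + {r | x = new_sq r}.
Proof.
case new_x: (is_new x); last by left; exists (down x); rewrite downK ?new_x.
by right; exists x.1; case: x new_x => a c /eqP /= ->.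
Qed.

Lemma adj_emb x y : adj (emb x) (emb y) = adj x y. Proof. by []. Qed.

Lemma adj_emb_new x r : adj (emb x) (new_sq r) = (x == last_sq r).
Proof.
case: x => a [c lt_c]; rewrite /adj /last_sq xpair_eqE /= -!val_eqE /=.
have -> : (m.+2 == c) = false by apply/eqP => e; move: lt_c; rewrite -e ltnNge leqnSn.
have -> : (c == m.+1) = false by apply/eqP => e; move: lt_c; rewrite e ltnn.
by rewrite eqSS orbF /= orbF.
Qed.

Lemma adj_new r r' : adj (new_sq r) (new_sq r') = (r != r').
Proof. by rewrite /adj /= eqxx /= !eqn_leq !ltnn /= andbF. Qed.

Lemma adj_last r r' : adj (last_sq r) (last_sq r') = (r != r').
Proof. by rewrite /adj /= eqxx /= !eqn_leq !ltnn /= andbF. Qed.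

End BoardExtension.

(* How the last column of a division of the 2 x (m+2) board attaches to the
   rest: (top square joined to its left neighbour, bottom square joined to
   its left neighbour, top and bottom squares joined). *)
Local Notation joins := (bool * bool * bool)%type.

Section Labels.
Variable m : nat.
Local Notation old_square := (square m.+1).
Local Notation new_square := (square m.+2).
Local Notation emb := (@emb m).
Local Notation last_sq := (last_sq m).
Local Notation new_sq := (new_sq m).

(* Given a labelling g of the small board (by pieces) and joining bits c,
   label the large board: old squares keep their label, a new square takes
   the label of the old square it is (directly or through the other new
   square) joined to, or a fresh label inr _ otherwise; the two fresh
   labels coincide iff the new squares are joined. *)
Definition ext_label (K : eqType) (g : old_square -> K) (c : joins)
    (x : new_square) : (K + bool)%type :=
  let: (jt, jb, jv) := c in
  if is_new x then
    if x.1 == ord0 then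
      (if jt then inl (g (last_sq ord0))
       else if jv && jb then inl (g (last_sq row1)) else inr false)
    else (if jb then inl (g (last_sq row1))
          else if jv && jt then inl (g (last_sq ord0)) else inr (~~ jv))
  else inl (g (down x)).

Lemma ext_label_emb (K : eqType) (g : old_square -> K) c z :
  ext_label g c (emb z) = inl (g z).
Proof. by case: c => [[jt jb] jv]; rewrite /ext_label is_new_emb embK. Qed.

Lemma ext_label_top (K : eqType) (g : old_square -> K) jt jb jv :
  ext_label g (jt, jb, jv) (new_sq ord0) =
  (if jt then inl (g (last_sq ord0))
   else if jv && jb then inl (g (last_sq row1)) else inr false).
Proof. by rewrite /ext_label is_new_sq eqxx. Qed.

Lemma ext_label_bot (K : eqType) (g : old_square -> K) jt jb jv :
  ext_label g (jt, jb, jv) (new_sq row1) =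
  (if jb then inl (g (last_sq row1))
   else if jv && jt then inl (g (last_sq ord0)) else inr (~~ jv)).
Proof. by rewrite /ext_label is_new_sq. Qed.

Lemma ext_label_anchor (K : eqType) (g : old_square -> K) c r k :
  ext_label g c (new_sq r) = inl k ->
  (ext_label g c (new_sq r) == inl (g (last_sq r))) ||
  ((ext_label g c (new_sq r) == ext_label g c (new_sq (flip r))) &&
   (ext_label g c (new_sq r) == inl (g (last_sq (flip r))))).
Proof.
case: c => [[jt jb] jv]; case: (row_cases r) => ->;
  rewrite ?ext_label_top ?ext_label_bot /flip /=.
all: by case: jt; case: jb; case: jv => lab_k //=; rewrite ?inl_eq ?eqxx ?orbT.
Qed.

Lemma ext_label_ker (K K' : eqType) (g : old_square -> K) (g' : old_square -> K')
    c x y :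
  (forall z w, (g z == g w) = (g' z == g' w)) ->
  (ext_label g c x == ext_label g c y) = (ext_label g' c x == ext_label g' c y).
Proof.
move=> same_ker; case: c => [[jt jb] jv].
case: (squareP x) => [[z ->]|[r ->]]; case: (squareP y) => [[w ->]|[r' ->]];
  rewrite ?ext_label_emb ?inl_eq ?same_ker //;
  try case: (row_cases r) => ->; try case: (row_cases r') => ->;
  rewrite ?ext_label_top ?ext_label_bot.
all: by case: jt; case: jb; case: jv; rewrite /= ?inl_eq ?same_ker.
Qed.

(* Joining bits compatible with the small board: when its last column lies
   in one piece, being joined is transitive among the new squares and the
   old piece; when it is split, the new column cannot join both pieces. *)
Definition compatible (same : bool) (c : joins) :=
  let: (jt, jb, jv) := c in
  if same then [&& (jt && jb) ==> jv, (jt && jv) ==> jb & (jb && jv) ==> jt]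
  else ~~ [&& jt, jb & jv].

Definition join_bits (K : eqType) (p : new_square -> K) : joins :=
  (p (new_sq ord0) == p (emb (last_sq ord0)),
   p (new_sq row1) == p (emb (last_sq row1)),
   p (new_sq ord0) == p (new_sq row1)).

Lemma join_bits_ext (K : eqType) (g : old_square -> K) c :
  compatible (g (last_sq ord0) == g (last_sq row1)) c ->
  join_bits (ext_label g c) = c.
Proof.
case: c => [[jt jb] jv]; rewrite /join_bits !ext_label_emb ext_label_top ext_label_bot.
case e: (g (last_sq ord0) == g (last_sq row1)); have e' := e; rewrite eq_sym in e'.
all: by case: jt; case: jb; case: jv; rewrite /= ?inl_eq ?e ?e' ?eqxx.
Qed.

(* The property of the labelling by pieces that makes it recoverable from
   its restriction: a new square sharing its label with an old square is
   joined to its left neighbour, possibly through the other new square. *)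
Definition anchored (K : eqType) (p : new_square -> K) :=
  forall z r, p (new_sq r) == p (emb z) ->
   (p (new_sq r) == p (emb (last_sq r))) ||
   ((p (new_sq r) == p (new_sq (flip r))) &&
    (p (new_sq (flip r)) == p (emb (last_sq (flip r))))).

Lemma ext_label_new_old (K : eqType) (p : new_square -> K) : anchored p ->
  forall r z, (p (new_sq r) == p (emb z)) =
  (ext_label (p \o emb) (join_bits p) (new_sq r) ==
   ext_label (p \o emb) (join_bits p) (emb z)).
Proof.
move=> anch r z; rewrite ext_label_emb /join_bits; have pz := anch z r.
case: (row_cases r) pz => -> pz; rewrite ?ext_label_top ?ext_label_bot /comp.
{ case: (p (new_sq ord0) =P p (emb (last_sq ord0))) => [e1|ne1].
    by rewrite inl_eq e1.
  case: (p (new_sq ord0) =P p (new_sq row1)) => [e2|ne2] /=;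
  case: (p (new_sq row1) =P p (emb (last_sq row1))) => [e3|ne3] /=;
   try by rewrite inl_eq e2 e3.
  all: apply/eqP => e; move: (pz (introT eqP e)); rewrite /flip /=.
  all: by case/orP => [/eqP|/andP[/eqP ? /eqP ?]]; auto. }
case: (p (new_sq row1) =P p (emb (last_sq row1))) => [e1|ne1].
  by rewrite inl_eq e1.
case: (p (new_sq ord0) =P p (new_sq row1)) => [e2|ne2] /=;
case: (p (new_sq ord0) =P p (emb (last_sq ord0))) => [e3|ne3] /=;
 try by rewrite inl_eq -e2 e3.
all: apply/eqP => e; move: (pz (introT eqP e)); rewrite /flip /=.
all: by case/orP => [/eqP|/andP[/eqP ? /eqP ?]]; auto.
Qed.

Lemma ext_label_new_new (K : eqType) (p : new_square -> K) :
  (p (new_sq ord0) == p (new_sq row1)) =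
  (ext_label (p \o emb) (join_bits p) (new_sq ord0) ==
   ext_label (p \o emb) (join_bits p) (new_sq row1)).
Proof.
rewrite /join_bits ext_label_top ext_label_bot /=.
case: (p (new_sq ord0) =P p (emb (last_sq ord0))) => [e1|ne1];
case: (p (new_sq row1) =P p (emb (last_sq row1))) => [e2|ne2];
case: (p (new_sq ord0) =P p (new_sq row1)) => [e3|ne3] //=; rewrite ?inl_eq ?eqxx //.
  by rewrite -e1 -e2 e3 eqxx.
by apply/esym/eqP => e; apply: ne3; rewrite e1 e2 e.
Qed.

Lemma ext_label_restr (K : eqType) (p : new_square -> K) : anchored p ->
  forall x y, (p x == p y) =
  (ext_label (p \o emb) (join_bits p) x == ext_label (p \o emb) (join_bits p) y).
Proof.
move=> anch x y.
case: (squareP x) => [[z ->]|[r ->]]; case: (squareP y) => [[w ->]|[r' ->]].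
- by rewrite !ext_label_emb inl_eq.
- by rewrite eq_sym ext_label_new_old // eq_sym.
- by rewrite ext_label_new_old.
case: (row_cases r) => ->; case: (row_cases r') => ->; rewrite ?eqxx //.
  exact: ext_label_new_new.
by rewrite eq_sym ext_label_new_new eq_sym.
Qed.

(* Number of pieces created by the joining bits: one for each new square
   not joined to an old piece, counted once if both are and are joined. *)
Definition new_pieces (c : joins) : nat :=
  let: (jt, jb, jv) := c in
  (~~ jt && ~~ (jv && jb)) + (~~ jb && ~~ (jv && jt)) - [&& ~~ jt, ~~ jb & jv].

Lemma setT_square : [set: new_square] =
  emb @: [set: old_square] :|: [set new_sq ord0; new_sq row1].
Proof.
apply/setP => x; rewrite !inE; case: (squareP x) => [[z ->]|[r ->]].
  by rewrite imset_f.
by case: (row_cases r) => ->; rewrite ?inE eqxx ?orbT.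
Qed.

Lemma card_ext_label (K : finType) (g : old_square -> K) c :
  #|ext_label g c @: [set: new_square]| = #|g @: [set: old_square]| + new_pieces c.
Proof.
rewrite setT_square imsetU -imset_comp (eq_imset _ (@ext_label_emb K g c)).
rewrite imset_comp imsetU1 imset_set1 cardsU2 card_imset; last by move=> a b [].
have mem_inl z : inl (g z) \in inl @: (g @: [set: old_square]) by rewrite !imset_f.
have mem_inr b : (inr b : K + bool) \in inl @: (g @: [set: old_square]) = false.
  by apply/imsetP => [[?]].
case: c => [[jt jb] jv]; rewrite ext_label_top ext_label_bot.
by case: jt; case: jb; case: jv; rewrite /= ?mem_inl ?mem_inr /= ?andbF ?addn0 //; lia.
Qed.

End Labels.

Section Connectivity.
Variable m : nat.
Local Notation old_square := (square m.+1).
Local Notation new_square := (square m.+2).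
Local Notation emb := (@emb m).
Local Notation last_sq := (last_sq m).
Local Notation new_sq := (new_sq m).

Definition reroutable (B : {set new_square}) (u : new_square) :=
  ~~ is_new u || (emb (last_sq u.1) \in B) ||
  ((new_sq (flip u.1) \in B) && (emb (last_sq (flip u.1)) \in B)).

Lemma reroutable_step (B : {set new_square}) u v :
  adj_in B u v -> reroutable B u -> reroutable B v.
Proof.
move=> /andP[/andP[uv uB] vB].
case: (squareP v) uv vB => [[w ->]|[r ->]] uv vB; first by rewrite /reroutable is_new_emb.
case: (squareP u) uv uB => [[z ->]|[r' ->]] uv uB.
  by move=> _; move: uv; rewrite adj_emb_new => /eqP zr; rewrite /reroutable /= -zr uB orbT.
move: uv vB; rewrite adj_new => /neq_flipE -> vB.
rewrite /reroutable /= !is_new_sq /= flipK.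
by case/orP => [r'B|/andP[_ ->]]; rewrite ?orbT // uB r'B ?orbT.
Qed.

Lemma reroutable_connect (B : {set new_square}) x u :
  connect (adj_in B) (emb x) u -> reroutable B u.
Proof.
move=> xu; apply: (connect_closed (@reroutable_step B) xu).
by rewrite /reroutable is_new_emb.
Qed.

Definition retract (B : {set new_square}) (u : new_square) : old_square :=
  if is_new u then
    (if emb (last_sq u.1) \in B then last_sq u.1 else last_sq (flip u.1))
  else down u.

Lemma retract_mem (B : {set new_square}) u :
  u \in B -> reroutable B u -> emb (retract B u) \in B.
Proof.
case: (squareP u) => [[z ->]|[r ->]] uB; first by rewrite /retract is_new_emb embK.
by rewrite /reroutable /retract is_new_sq /=; case: ifP => //= _ /andP[_ ->].
Qed.

Lemma retract_emb (B : {set new_square}) z : retract B (emb z) = z.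
Proof. by rewrite /retract is_new_emb embK. Qed.

Lemma retract_step (B : {set new_square}) u v :
  adj_in B u v -> reroutable B u -> retract B u = retract B v \/
  adj_in [set z | emb z \in B] (retract B u) (retract B v).
Proof.
move=> uv ru; have rv := reroutable_step uv ru.
case/andP: uv => /andP [uv uB] vB.
have uB' := retract_mem uB ru; have vB' := retract_mem vB rv.
suff : retract B u = retract B v \/ adj (retract B u) (retract B v).
  by case=> [->|uv']; [left|right; rewrite /= !inE uv' uB' vB'].
have last_step (a b : 'I_2) : last_sq a = last_sq b \/ adj (last_sq a) (last_sq b).
  by rewrite adj_last; case: eqP => [->|_]; [left|right].
case: (squareP u) uv uB => [[z ->]|[r ->]] uv uB;
case: (squareP v) uv vB => [[w ->]|[r' ->]] uv vB.
- by right; rewrite !retract_emb.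
- move: uv; rewrite adj_emb_new => /eqP zr; subst z; left.
  by rewrite /retract is_new_emb is_new_sq embK /= uB.
- move: uv; rewrite adj_sym adj_emb_new => /eqP wr; subst w; left.
  by rewrite /retract is_new_emb is_new_sq embK /= vB.
by rewrite /retract !is_new_sq /=; case: ifP => _; case: ifP => _; apply: last_step.
Qed.

Lemma connected_restr (B : {set new_square}) :
  connected_set B -> connected_set [set z : old_square | emb z \in B].
Proof.
move/connectedP => connB; apply/connectedP => x y; rewrite !inE => xB yB.
have := connect_map (e' := adj_in [set z : old_square | emb z \in B])
  (@reroutable_step B) (@retract_step B) (connB _ _ xB yB).
by rewrite !retract_emb; apply; rewrite /reroutable is_new_emb.
Qed.

Lemma ext_label_new_reach (K : eqType) (g : old_square -> K) c l r z :
  let A := [set y in [set: new_square] | l == ext_label g c y] in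
  new_sq r \in A -> emb z \in A ->
  exists2 w, emb w \in A & connect (adj_in A) (new_sq r) (emb w).
Proof.
move=> A; have inA y : (y \in A) = (l == ext_label g c y) by rewrite !inE.
move=> rA zA; move: (rA) (zA); rewrite !inA ext_label_emb => /eqP lr /eqP lz.
have := @ext_label_anchor m _ g c r (g z).
rewrite -lr -lz => /(_ erefl) /orP [lr_last|/andP[lr_flip lr_last]].
  have lastA : emb (last_sq r) \in A by rewrite inA ext_label_emb.
  exists (last_sq r) => //; apply: connect1; apply: adj_inI => //.
  by rewrite adj_sym adj_emb_new.
have flipA : new_sq (flip r) \in A by rewrite inA.
have lastA : emb (last_sq (flip r)) \in A by rewrite inA ext_label_emb.
exists (last_sq (flip r)) => //.
apply: (@connect_trans _ _ (new_sq (flip r))); apply: connect1; apply: adj_inI => //.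
  by rewrite adj_new neq_flip.
by rewrite adj_sym adj_emb_new.
Qed.

(* The blocks of the extended labelling of a partition into pieces are
   connected: old squares are joined through their old piece, and new
   squares are handled by ext_label_new_reach. *)
Lemma connected_ext_label (Q : {set {set old_square}}) c x : piece_partition Q ->
  connected_set [set y in [set: new_square] |
                 ext_label (pblock Q) c x == ext_label (pblock Q) c y].
Proof.
case/andP => partQ /forall_inP pieceQ; have [/eqP covQ tiQ _] := and3P partQ.
set l := ext_label (pblock Q) c x.
set A := [set y in [set: new_square] | l == ext_label (pblock Q) c y].
have inA y : (y \in A) = (l == ext_label (pblock Q) c y) by rewrite !inE.
have old_old z w : emb z \in A -> emb w \in A -> connect (adj_in A) (emb z) (emb w).
  rewrite !inA !ext_label_emb => /eqP lz /eqP lw.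
  have ezw : pblock Q w = pblock Q z by move: lw; rewrite lz => -[].
  have Qz : pblock Q z \in Q by apply: pblock_mem; rewrite covQ inE.
  have /andP [_ /connectedP connQz] := pieceQ _ Qz.
  have zQz : z \in pblock Q z by rewrite mem_pblock covQ inE.
  have wQz : w \in pblock Q z by rewrite -ezw mem_pblock covQ inE.
  apply: (connect_map (e' := adj_in A) (a := predT)) (connQz _ _ zQz wQz) _ => // u v.
  case/andP=> /andP[uv uQ] vQ _; right.
  by apply: adj_inI; rewrite ?adj_emb // inA ext_label_emb lz
    ?(def_pblock tiQ Qz uQ) ?(def_pblock tiQ Qz vQ).
have new_old := @ext_label_new_reach _ (pblock Q) c l.
apply/connectedP => y1 y2 y1A y2A.
case: (squareP y1) y1A => [[z ->]|[r ->]] y1A;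
case: (squareP y2) y2A => [[w ->]|[r' ->]] y2A.
- exact: old_old.
- have [w' w'A r'w'] := new_old r' z y2A y1A.
  by rewrite connect_adj_in_sym; apply: connect_trans r'w' (old_old _ _ w'A y1A).
- have [w' w'A rw'] := new_old r w y1A y2A.
  exact: connect_trans rw' (old_old _ _ w'A y2A).
case: (r =P r') => [<-|ne]; first exact: connect0.
by apply: connect1; apply: adj_inI; rewrite ?adj_new //; apply/eqP.
Qed.

End Connectivity.

Section Correspondence.
Variable m : nat.
Local Notation old_square := (square m.+1).
Local Notation new_square := (square m.+2).
Local Notation emb := (@emb m).
Local Notation last_sq := (last_sq m).
Local Notation new_sq := (new_sq m).

Definition restr (P : {set {set new_square}}) : {set {set old_square}} :=
  preim_partition (fun z => pblock P (emb z)) [set: old_square].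
Definition extend (Q : {set {set old_square}}) (c : joins) : {set {set new_square}} :=
  preim_partition (ext_label (pblock Q) c) [set: new_square].

Definition last_joined (Q : {set {set old_square}}) :=
  pblock Q (last_sq ord0) == pblock Q (last_sq row1).

Lemma restr_piece_partition P : piece_partition P -> piece_partition (restr P).
Proof.
case/andP => partP /forall_inP pieceP; apply/andP; split; first exact: preim_partitionP.
apply/forall_inP => A /imsetP [x _ ->]; have [/eqP covP tiP _] := and3P partP.
have -> : [set y in [set: old_square] | pblock P (emb x) == pblock P (emb y)] =
          [set y | emb y \in pblock P (emb x)].
  by apply/setP => y; rewrite !inE eq_pblock_mem.
have Px : pblock P (emb x) \in P by apply: pblock_mem; rewrite covP inE.
case/andP: (pieceP _ Px) => _ connPx; apply/andP; split; last exact: connected_restr.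
by apply/set0Pn; exists x; rewrite inE mem_pblock covP inE.
Qed.

Lemma extend_piece_partition Q c : piece_partition Q -> piece_partition (extend Q c).
Proof.
move=> pieceQ; apply/andP; split; first exact: preim_partitionP.
apply/forall_inP => A /imsetP [x _ ->]; apply/andP; split.
  by apply/set0Pn; exists x; rewrite !inE eqxx.
exact: connected_ext_label.
Qed.

Lemma restr_extend Q c : piece_partition Q -> restr (extend Q c) = Q.
Proof.
case/andP => partQ _; rewrite /restr -[RHS](preim_partition_pblock partQ).
apply: preim_partition_ext => z w.
by rewrite /extend eq_pblock_preim !ext_label_emb inl_eq.
Qed.

Lemma join_bits_extend Q c :
  compatible (last_joined Q) c -> join_bits (m := m) (pblock (extend Q c)) = c.
Proof.
by move=> compat; rewrite -{2}(join_bits_ext compat) /join_bits /extend !eq_pblock_preim.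
Qed.

Lemma anchored_pblock P : piece_partition P -> anchored (m := m) (pblock P).
Proof.
case/andP => partP /forall_inP pieceP z r rz.
have [/eqP covP tiP _] := and3P partP.
set B := pblock P (new_sq r).
have PB : B \in P by apply: pblock_mem; rewrite covP inE.
case/andP: (pieceP _ PB) => _ /connectedP connB.
have zB : emb z \in B by rewrite -eq_pblock_mem.
have rB : new_sq r \in B by rewrite mem_pblock covP inE.
have := reroutable_connect (connB _ _ zB rB); rewrite /reroutable is_new_sq /=.
case/orP => [lastB|/andP[flipB lastB]]; first by rewrite /B eq_pblock_mem // lastB.
by apply/orP; right; rewrite /B (same_pblock tiP flipB) eqxx eq_pblock_mem.
Qed.

Lemma extend_restr P :
  piece_partition P -> extend (restr P) (join_bits (m := m) (pblock P)) = P.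
Proof.
move=> pieceP; have partP : partition P [set: new_square] by case/andP: pieceP.
rewrite -[RHS](preim_partition_pblock partP) /extend.
apply: preim_partition_ext => x y.
rewrite (ext_label_restr (anchored_pblock pieceP)).
by apply: ext_label_ker => z w; rewrite /restr eq_pblock_preim.
Qed.

(* The joining bits of a division are compatible with its restriction:
   piece membership is an equivalence relation. *)
Lemma compatible_join_bits P : compatible (last_joined (restr P)) (join_bits (m := m) (pblock P)).
Proof.
rewrite /last_joined /restr eq_pblock_preim /join_bits /compatible.
set a := pblock P (emb (last_sq ord0)); set b := pblock P (emb (last_sq row1)).
set t := pblock P (new_sq ord0); set u := pblock P (new_sq row1).
case: (a =P b) => [ab|nab]; case: (t =P a) => [ta|nta]; case: (u =P b) => [ub|nub];
  case: (t =P u) => [tu|ntu] //=.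
all: exfalso; congruence.
Qed.

Lemma card_extend Q c : piece_partition Q -> #|extend Q c| = #|Q| + new_pieces c.
Proof.
by case/andP => partQ _; rewrite /extend card_preim_partition card_ext_label pblock_imsetT.
Qed.

End Correspondence.

Lemma right_split_join_bits m (P : {set {set square m.+2}}) :
  right_split m.+2 P = ~~ (join_bits (m := m) (pblock P)).2.
Proof. by []. Qed.

Lemma right_split_last_joined m (Q : {set {set square m.+1}}) :
  right_split m.+1 Q = ~~ last_joined Q.
Proof. by []. Qed.

Definition ndiv n k (b : bool) :=
  #|[set P : {set {set square n}} |
     piece_partition P && (#|P| == k) && (right_split n P == b)]|.

Definition nfiber m k (b : bool) (c : joins) :=
  #|[set Q : {set {set square m.+1}} | piece_partition Q &&
     compatible (last_joined Q) c && (#|Q| + new_pieces c == k) && (~~ c.2 == b)]|.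

(* restr and extend are inverse bijections between divisions of the large
   board and pairs (division of the small board, compatible bits). *)
Lemma ndiv_fibers m k b : ndiv m.+2 k b = \sum_(c : joins) nfiber m k b c.
Proof.
rewrite /nfiber -(card_set_pair (fun (Q : {set {set square m.+1}}) c =>
   piece_partition Q && compatible (last_joined Q) c &&
   (#|Q| + new_pieces c == k) && (~~ c.2 == b))).
set S := [set p | _].
rewrite -(@card_in_imset _ _ (fun p => extend p.1 p.2) S); last first.
  move=> [Q1 c1] [Q2 c2]; rewrite !inE /=.
  case/andP=> /andP[/andP[pieceQ1 compat1] _] _.
  case/andP=> /andP[/andP[pieceQ2 compat2] _] _ e.
  have eQ : Q1 = Q2 by rewrite -(restr_extend c1 pieceQ1) e restr_extend.
  by subst Q2; rewrite -(join_bits_extend compat1) e join_bits_extend.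
rewrite /ndiv; apply: eq_card => P; rewrite inE.
apply/idP/imsetP => [/andP[/andP[pieceP /eqP cardP] /eqP splitP]|[[Q c] QcS ->]].
  exists (restr P, join_bits (m := m) (pblock P)); last by rewrite /= extend_restr.
  rewrite inE restr_piece_partition // compatible_join_bits.
  rewrite -card_extend ?restr_piece_partition // extend_restr // cardP eqxx.
  by rewrite -splitP right_split_join_bits eqxx.
move: QcS; rewrite inE => /andP[/andP[/andP[pieceQ compat] cardQc] splitc].
by rewrite extend_piece_partition // card_extend // cardQc right_split_join_bits
  join_bits_extend.
Qed.

Lemma nfiber_ndiv m k b c : nfiber m k b c =
  if (~~ c.2 == b) && (new_pieces c <= k) then
    compatible true c * ndiv m.+1 (k - new_pieces c) false +
    compatible false c * ndiv m.+1 (k - new_pieces c) true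
  else 0.
Proof.
rewrite /nfiber /ndiv !card_set_sum.
case: ifP => [/andP[splitc le_k]|bad]; last first.
  apply: big1 => Q _; move: bad; case: (~~ c.2 == b); rewrite ?andbF //= => lt_k.
  have -> : (#|Q| + new_pieces c == k) = false by apply/eqP; lia.
  by rewrite andbF.
rewrite !big_distrr -big_split; apply: eq_bigr => Q _.
have -> : (#|Q| + new_pieces c == k) = (#|Q| == k - new_pieces c) by apply/eqP/eqP; lia.
rewrite splitc andbT right_split_last_joined.
by case: (last_joined Q); case: (compatible true c); case: (compatible false c);
  case: (piece_partition Q); case: (#|Q| == k - new_pieces c).
Qed.

Lemma sum_joins (F : joins -> nat) : \sum_c F c =
  F (true, true, true) + F (true, true, false) +
  (F (true, false, true) + F (true, false, false)) +
  (F (false, true, true) + F (false, true, false) +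
  (F (false, false, true) + F (false, false, false))).
Proof.
have -> : \sum_c F c = \sum_(p : bool * bool) \sum_(v : bool) F (p, v).
  by rewrite (pair_bigA _ (fun p v => F (p, v))); apply: eq_bigr => -[].
have -> : \sum_(p : bool * bool) \sum_(v : bool) F (p, v) =
          \sum_(a : bool) \sum_(b : bool) \sum_(v : bool) F (a, b, v).
  by rewrite (pair_bigA _ (fun a b => \sum_(v : bool) F (a, b, v))); apply: eq_bigr => -[].
by rewrite !big_bool.
Qed.

Lemma ndiv0 n b : ndiv n.+1 0 b = 0.
Proof.
apply/eqP; rewrite cards_eq0; apply/eqP/setP => P; rewrite !inE.
apply/negbTE/negP => /andP[/andP[/andP[partP _]]]; rewrite cards_eq0 => /eqP P0.
case/and3P: partP => /eqP; rewrite P0 => cov _ _.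
have : ((ord0, ord0) : square n.+1) \in cover set0 by rewrite cov inE.
by rewrite /cover big_set0 inE.
Qed.

Lemma ndiv_split_rec m k : ndiv m.+2 k true =
  ndiv m.+1 (k - 2) false + ndiv m.+1 (k - 2) true +
  2 * (ndiv m.+1 (k - 1) false + ndiv m.+1 (k - 1) true) + ndiv m.+1 k true.
Proof.
rewrite ndiv_fibers sum_joins !nfiber_ndiv /=.
rewrite ?subn0 ?addn0 ?add0n (_ : 1 + 1 = 2) //.
by case: k => [|[|k]] /=; rewrite ?ndiv0; lia.
Qed.

Lemma ndiv_joined_rec m k : ndiv m.+2 k false =
  ndiv m.+1 (k - 1) false + ndiv m.+1 (k - 1) true +
  2 * ndiv m.+1 k true + ndiv m.+1 k false.
Proof.
rewrite ndiv_fibers sum_joins !nfiber_ndiv /=.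
rewrite ?subn0 ?addn0 ?add0n (_ : 1 + 1 - 1 = 1) //.
by case: k => [|k] /=; rewrite ?ndiv0; lia.
Qed.

Definition top1 : square 1 := (ord0, ord_max).
Definition bot1 : square 1 := (row1, ord_max).

Lemma square1P (x : square 1) : x = top1 \/ x = bot1.
Proof.
case: x => r c; have -> : c = ord_max by apply: val_inj; case: c => [[|]].
by case: (row_cases r) => ->; [left|right].
Qed.

Definition board1 (b : bool) : {set {set square 1}} :=
  if b then preim_partition id [set: square 1]
  else preim_partition (fun _ => tt) [set: square 1].

Lemma right_split1 P : right_split 1 P = (pblock P top1 != pblock P bot1).
Proof. by []. Qed.

Lemma board1_piece_partition b : piece_partition (board1 b).
Proof.
suff preim_pieces (K : eqType) (f : square 1 -> K) :
    (forall x y, f x = f y -> x = y \/ adj x y) ->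
    piece_partition (preim_partition f [set: square 1]).
  rewrite /board1; case: b; apply: preim_pieces => x y; first by move=> ->; left.
  by case: (square1P x) => ->; case: (square1P y) => -> _; [left|right|right|left].
move=> f_adj; apply/andP; split; first exact: preim_partitionP.
apply/forall_inP => A /imsetP [x _ ->]; apply/andP; split.
  by apply/set0Pn; exists x; rewrite !inE eqxx.
apply/connectedP => y z; rewrite !inE => /eqP fy /eqP fz.
case: (f_adj y z); first by rewrite -fy -fz.
  by move=> ->; apply: connect0.
by move=> yz; apply: connect1; apply: adj_inI; rewrite ?inE -?fy -?fz ?eqxx.
Qed.

Lemma card_board1 b : #|board1 b| = b.+1.
Proof.
case: b; rewrite /board1 card_preim_partition.
  by rewrite imset_id cardsT card_prod !card_ord.
rewrite (_ : _ @: _ = [set tt]) ?cards1 //.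
by apply/setP => -[]; rewrite !inE; apply/imsetP; exists top1.
Qed.

Lemma right_split_board1 b : right_split 1 (board1 b) = b.
Proof. by case: b; rewrite right_split1 /board1 eq_pblock_preim. Qed.

Lemma board1_classify P : piece_partition P -> P = board1 (right_split 1 P).
Proof.
case/andP => partP _; rewrite -{1}(preim_partition_pblock partP) right_split1.
case: eqP => [e|ne]; apply: preim_partition_ext => x y.
  by case: (square1P x) => ->; case: (square1P y) => ->; rewrite ?e ?eqxx.
have [tb bt] : (top1 == bot1) = false /\ (bot1 == top1) = false by [].
case: (square1P x) => ->; case: (square1P y) => ->; rewrite ?eqxx ?tb ?bt //.
  by apply/eqP.
by apply/eqP => e; apply: ne.
Qed.

Lemma ndiv1 k b : ndiv 1 k b = (k == b.+1).
Proof.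
rewrite /ndiv (@eq_card _ _ [pred P | (P == board1 b) && (k == b.+1)]); last first.
  move=> P; rewrite !inE; apply/idP/idP.
    case/andP => /andP [pieceP /eqP cardP] /eqP splitP.
    have eP := board1_classify pieceP; rewrite splitP in eP.
    by rewrite -cardP eP card_board1 !eqxx.
  case/andP => /eqP -> /eqP ->.
  by rewrite board1_piece_partition card_board1 right_split_board1 !eqxx.
case: (k == b.+1); last by apply: eq_card0 => P; rewrite !inE ?andbF.
by apply: (@eq_card1 _ (board1 b)) => P; rewrite !inE ?andbT.
Qed.

Lemma s_ndiv k n : s k n = ndiv n k true.
Proof.
rewrite /s /ndiv; apply: eq_card => P; rewrite !inE /division /piece_partition.
by rewrite -!andbA eqb_id.
Qed.

Lemma d_ndiv k n : d k n = ndiv n k true + ndiv n k false.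
Proof.
rewrite /d /ndiv !card_set_sum -big_split /=; apply: eq_bigr => P _.
rewrite /division /piece_partition.
by case: (right_split n P); case: (partition P _); case: [forall A in P, piece A];
  case: (#|P| == k).
Qed.

Import GRing.Theory Num.Theory.
Local Open Scope ring_scope.

Definition s3_poly (x : rat) :=
  4%:R / 3%:R * x ^+ 3 - 3%:R * x ^+ 2 + 8%:R / 3%:R * x - 1.
Definition d3_poly (x : rat) := 2%:R / 3%:R * x ^+ 4 - 4%:R / 3%:R * x ^+ 3
  + 11%:R / 6%:R * x ^+ 2 - 13%:R / 6%:R * x + 1.

Lemma ndiv_small n : let x := n.+1%:R : rat in
  [/\ (ndiv n.+1 1 false)%:R = 1 :> rat, (ndiv n.+1 1 true)%:R = 0 :> rat &
      (ndiv n.+1 2 true)%:R = 2%:R * x - 1] /\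
  [/\ (ndiv n.+1 2 false)%:R = (x - 1) * (2%:R * x - 1),
      (ndiv n.+1 3 true)%:R = s3_poly x & (ndiv n.+1 3 false)%:R = d3_poly x - s3_poly x].
Proof.
elim: n => [|n [[IH1f IH1t IH2t] [IH2f IH3t IH3f]]] x.
  by rewrite /x !ndiv1 /s3_poly /d3_poly /=; split; split; field.
have -> : x = n.+1%:R + 1 by rewrite /x natr1.
rewrite !(ndiv_joined_rec, ndiv_split_rec) /= !ndiv0 ?natrD ?natrM.
rewrite IH1f IH1t IH2t IH2f IH3t IH3f /s3_poly /d3_poly.
by split; split; field.
Qed.

Unset Implicit Arguments.

Theorem mainTheorem4 (n : nat) (hn : (1 <= n)%N) :
  (s 3 n)%:R = 4%:R / 3%:R * (n%:R : rat) ^+ 3 - 3%:R * n%:R ^+ 2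
                 + 8%:R / 3%:R * n%:R - 1
  /\
  (d 3 n)%:R = 2%:R / 3%:R * (n%:R : rat) ^+ 4 - 4%:R / 3%:R * n%:R ^+ 3
                 + 11%:R / 6%:R * n%:R ^+ 2 - 13%:R / 6%:R * n%:R + 1.
Proof.
case: n hn => // n _; have [_ [_ s3 d3_s3]] := ndiv_small n.
rewrite s_ndiv d_ndiv natrD s3 d3_s3; split; first by [].
by rewrite /s3_poly /d3_poly addrC subrK.
Qed.
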